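(* Let $(S,\le)$ be a continuous dcwo. For any Scott-closed subset $F$ of $S$, the set $\operatorname{Max}F$ of maximal elements of $F$ is finite and $F=\downarrow\operatorname{Max}F$.
   Context: A continuous dcwo is a partial order $(S,\le)$ which is well (well-founded, no infinite antichain), a dcpo (every directed subset $D$, i.e. nonempty with pairwise upper bounds in $D$, has a least upper bound), and continuous (for every $x$, $\{y\mid y\ll x\}$ is directed with lub $x$, where $y\ll x$ iff every directed $D$ with $x\le\bigvee D$ contains an element $z\ge y$). A set is Scott-open if it is upward-closed and meets every directed set whose lub it contains; Scott-closed sets are complements of Scott-open sets. *)

From Stdlib Require Import List.

Section Dcwo.
Context {S : Type} (le : S -> S -> Prop).

Definition is_partial_order : Prop :=
  (forall x, le x x) /\
  (forall x y, le x y -> le y x -> x = y) /\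
  (forall x y z, le x y -> le y z -> le x z).

Definition lt_of (x y : S) : Prop := le x y /\ x <> y.

Definition finite_set (A : S -> Prop) : Prop :=
  exists l : list S, forall x, A x -> In x l.

Definition antichain (A : S -> Prop) : Prop :=
  forall x y, A x -> A y -> le x y -> x = y.

Definition well_order_po : Prop :=
  well_founded lt_of /\ (forall A, antichain A -> finite_set A).

Definition directed (D : S -> Prop) : Prop :=
  (exists x, D x) /\
  (forall x y, D x -> D y -> exists z, D z /\ le x z /\ le y z).

Definition is_lub (D : S -> Prop) (s : S) : Prop :=
  (forall d, D d -> le d s) /\ (forall u, (forall d, D d -> le d u) -> le s u).

Definition dcpo : Prop :=
  forall D, directed D -> exists s, is_lub D s.

Definition way_below (y x : S) : Prop :=
  forall D s, directed D -> is_lub D s -> le x s -> exists z, D z /\ le y z.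

Definition continuous_po : Prop :=
  forall x, directed (fun y => way_below y x) /\ is_lub (fun y => way_below y x) x.

Definition continuous_dcwo : Prop :=
  is_partial_order /\ well_order_po /\ dcpo /\ continuous_po.

Definition scott_open (U : S -> Prop) : Prop :=
  (forall x y, U x -> le x y -> U y) /\
  (forall D s, directed D -> is_lub D s -> U s -> exists d, D d /\ U d).

Definition scott_closed (F : S -> Prop) : Prop :=
  scott_open (fun x => ~ F x).

Definition MaxSet (F : S -> Prop) : S -> Prop :=
  fun x => F x /\ forall y, F y -> le x y -> y = x.

Definition down_set (A : S -> Prop) : S -> Prop :=
  fun x => exists m, A m /\ le x m.

End Dcwo.

From Stdlib Require Import List Classical.
From mathcomp Require Import ssreflect ssrfun ssrbool.
From mathcomp Require Import boolp classical_sets.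

(* Maximal elements of F form an antichain, so there are finitely many.
   Every x in F lies below one of them by Zorn's lemma applied to the part of F
   above x: a nonempty chain there is directed, and its lub stays in F because
   Scott-closed sets are closed under directed lubs.  Conversely F is a lower
   set, so it contains everything below its maximal elements. *)

Section ScottClosed.
Variables (S : Type) (le : S -> S -> Prop).
Hypotheses (le_po : is_partial_order le) (le_dcpo : dcpo le).

Lemma scott_closed_down (F : S -> Prop) x y :
  scott_closed le F -> F y -> le x y -> F x.
Proof.
move=> [upC _] Fy xy; apply: NNPP => nFx.
exact: upC nFx xy Fy.
Qed.

Lemma scott_closed_lub (F : S -> Prop) (D : S -> Prop) s :
  scott_closed le F -> directed le D -> (forall d, D d -> F d) ->
  is_lub le D s -> F s.
Proof.
move=> [_ inaccC] Ddir DF Ds; apply: NNPP => nFs.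
have [d [Dd nFd]] := inaccC D s Ddir Ds nFs.
exact/nFd/DF.
Qed.

Lemma chain_directed (D : S -> Prop) :
  (exists x, D x) -> total_on D le -> directed le D.
Proof.
move=> D0 Dtot; split=> // x y Dx Dy.
have [/= xy|yx] := Dtot x y Dx Dy.
- by exists y; split=> //; split=> //; apply: (proj1 le_po).
- by exists x; split=> //; split=> //; apply: (proj1 le_po).
Qed.

Lemma exists_MaxSet_above (F : S -> Prop) x :
  scott_closed le F -> F x -> exists m, MaxSet le F m /\ le x m.
Proof.
move: le_po => [le_refl [le_anti le_trans]] Fclosed Fx.
pose T := {y : S | F y /\ le x y}.
pose R (a b : T) := `[< le (sval a) (sval b) >].
have RE a b : R a b <-> le (sval a) (sval b) by rewrite /R asboolE.
have chain_ub (A : set T) : total_on A R -> exists t, forall a, A a -> R a t.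
  move=> Atot; have [[a0 Aa0]|noA] := pselect (exists a, A a); last first.
    by exists (exist _ x (conj Fx (le_refl x))) => a Aa; case: noA; exists a.
  pose D y := exists2 a, A a & sval a = y.
  have Ddir : directed le D.
    apply: chain_directed; first by exists (sval a0), a0.
    by move=> _ _ [a Aa <-] [b Ab <-]; case: (Atot a b Aa Ab) => /RE; auto.
  have [s Ds] := le_dcpo D Ddir.
  have Fs : F s.
    by apply: scott_closed_lub Fclosed Ddir _ Ds => _ [a _ <-]; case: (svalP a).
  have xs : le x s.
    by apply: (le_trans x (sval a0)); [case: (svalP a0)|apply: (proj1 Ds); exists a0].
  by exists (exist _ s (conj Fs xs)) => a Aa; apply/RE/(proj1 Ds); exists a.
have [|||[m [Fm xm]] mmax] := @Zorn T R _ _ _ chain_ub.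
- by move=> a; apply/RE.
- by move=> a b c /RE ab /RE bc; apply/RE; apply: le_trans bc.
- move=> [a Pa] [b Pb] /RE /= ab /RE /= ba.
  have eab : a = b by apply: le_anti.
  by subst b; congr exist; apply: Prop_irrelevance.
exists m; split=> //; split=> // y Fy my.
have xy : le x y by apply: le_trans my.
have ym : exist _ y (conj Fy xy) = exist _ m (conj Fm xm) :> T by apply/mmax/RE.
exact: (congr1 sval ym).
Qed.

Lemma antichain_MaxSet (F : S -> Prop) : antichain le (MaxSet le F).
Proof. by move=> a b [_ amax] [Fb _] ab; symmetry; apply: amax. Qed.

End ScottClosed.

Theorem lemma3p5 (S : Type) (le : S -> S -> Prop)
  (HS : continuous_dcwo le) (F : S -> Prop) (HF : scott_closed le F) :
  finite_set (MaxSet le F) /\ (forall x, F x <-> down_set le (MaxSet le F) x).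
Proof.
have [le_po [[_ antichain_finite] [le_dcpo _]]] := HS.
split; first exact/antichain_finite/antichain_MaxSet.
move=> x; split; first exact: exists_MaxSet_above.
by move=> [m [[Fm _] xm]]; apply: scott_closed_down HF Fm xm.
Qed.
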